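(* Let $L_w = BWB^\top\in\mathbb{R}^{n\times n}$ be the weighted Laplacian of a connected undirected graph with nonnegative edge weights (so that its second smallest eigenvalue is positive), and let $E\in\mathbb{R}^{n\times k}$ be a port matrix. Consider the system $\dot x = -L_w x + E d$, $y=E^\top x$, with transfer matrix $\mathbb{G}(s)=E^\top(sI+L_w)^{-1}E$. Let $\gamma>0$. If $\|\mathbb{G}\|_\infty\le\gamma$, then $P=\gamma I_n$ satisfies the Riccati inequality $$-PL_w - L_w^\top P + EE^\top + \frac{1}{\gamma^2}PEE^\top P \preceq 0 .$$
   Context: A weighted undirected graph has node set $\{v_1,\dots,v_n\}$, edge set $\{\mathcal{E}_1,\dots,\mathcal{E}_m\}$ and edge weights $w_1,\dots,w_m$. Given an arbitrary orientation of each edge, the incidence matrix $B\in\mathbb{R}^{n\times m}$ has $B_{ij}=1$ if edge $\mathcal{E}_j$ starts at $v_i$, $B_{ij}=-1$ if it ends at $v_i$, and $0$ otherwise; $W=\mathrm{diag}(w_1,\dots,w_m)$ and the weighted Laplacian is $L_w=BWB^\top$. A port matrix $E\in\mathbb{R}^{n\times k}$ is a matrix each of whose columns has exactly one entry equal to $1$, exactly one entry equal to $-1$, and all other entries $0$. The $\mathcal{H}_\infty$-norm $\|\mathbb{G}\|_\infty$ is the induced $\mathcal{L}_2$-gain from $d$ to $y$ with $x(0)=0$, which equals $\sup_{\omega\in\mathbb{R}}\bar\sigma(\mathbb{G}(j\omega))$ with $\bar\sigma$ the largest singular value. $M\preceq 0$ means $-M$ is symmetric positive semidefinite. *)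

From HB Require Import structures.
From mathcomp Require Import all_boot all_order all_algebra.
Set Implicit Arguments. Unset Strict Implicit. Unset Printing Implicit Defensive.
Import Order.TTheory GRing.Theory Num.Theory.
Local Open Scope ring_scope.

Definition incidence (C : numClosedFieldType) (n m : nat)
  (src dst : 'I_m -> 'I_n) : 'M[C]_(n, m) :=
  \matrix_(i < n, j < m) ((i == src j)%:R - (i == dst j)%:R).

Definition weightmx (C : numClosedFieldType) (m : nat) (w : 'I_m -> C) : 'M[C]_m :=
  diag_mx (\row_j w j).

Definition laplacian (C : numClosedFieldType) (n m : nat)
  (src dst : 'I_m -> 'I_n) (w : 'I_m -> C) : 'M[C]_n :=
  incidence C src dst *m weightmx w *m (incidence C src dst)^T.

Definition adj (C : numClosedFieldType) (n m : nat)
  (src dst : 'I_m -> 'I_n) (w : 'I_m -> C) : rel 'I_n :=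
  fun u v => [exists j : 'I_m, (0 < w j) &&
     (((src j == u) && (dst j == v)) || ((src j == v) && (dst j == u)))].

Definition connected_graph (C : numClosedFieldType) (n m : nat)
  (src dst : 'I_m -> 'I_n) (w : 'I_m -> C) : Prop :=
  forall u v : 'I_n, connect (adj src dst w) u v.

Definition port_matrix (C : numClosedFieldType) (n k : nat) (E : 'M[C]_(n, k)) : Prop :=
  forall j : 'I_k,
    #|[pred i | E i j == 1]| = 1%N /\ #|[pred i | E i j == -1]| = 1%N /\
    (forall i, E i j != 1 -> E i j != -1 -> E i j = 0).

Definition transfer (C : numClosedFieldType) (n k : nat)
  (L : 'M[C]_n) (E : 'M[C]_(n, k)) (s : C) : 'M[C]_k :=
  E^T *m invmx (s%:M + L) *m E.

Definition vnorm2 (C : numClosedFieldType) (k : nat) (v : 'cV[C]_k) : C :=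
  \sum_(i < k) `|v i 0| ^+ 2.

(* Largest singular value of M is at most g (g >= 0): the induced 2-norm bound
   ||M v|| <= g ||v|| for all v. *)
Definition sigma_max_le (C : numClosedFieldType) (p q : nat)
  (M : 'M[C]_(p, q)) (g : C) : Prop :=
  forall v : 'cV[C]_q, vnorm2 (M *m v) <= g ^+ 2 * vnorm2 v.

(* ||G||_oo <= g : sup over real omega of sigma_max(G(j omega)) <= g.
   omega = 0 is excluded: sI + L is singular there; G extends continuously to
   omega = 0, so the supremum is the same. *)
Definition hinf_le (C : numClosedFieldType) (k : nat) (G : C -> 'M[C]_k) (g : C) : Prop :=
  forall omega : C, omega \is Num.real -> omega != 0 ->
    sigma_max_le (G (omega * 'i)) g.

Definition nsd (C : numClosedFieldType) (n : nat) (M : 'M[C]_n) : Prop :=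
  (- M)^T = - M /\
  forall x : 'cV[C]_n, (forall i, x i 0 \is Num.real) ->
    0 <= ((x^T *m (- M) *m x) 0 0).

(* Fix a real x, put u = E^T x and, for omega > 0, y = (j omega I + L)^-1 E u, so that
   G(j omega) u = E^T y.  Since <E^T y, u> = y^* (j omega I + L) y, the gain bound
   |E^T y| <= gamma |u|, tested against u and against -j u, bounds both y^* L y and
   omega |y|^2 by gamma |u|^2.  Writing |u|^2 = x^* (j omega I + L) y and splitting it
   by AM-GM into an L-part and a j omega-part gives, for omega = s^2,
   |u|^2 <= gamma x^T L x + s (|x|^2 + gamma |u|^2); letting s -> 0 yields
   |E^T x|^2 <= gamma x^T L x.  With P = gamma I the Riccati expression is
   2 (E E^T - gamma L), so this is exactly the claim. *)

From HB Require Import structures.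
From mathcomp Require Import all_boot all_order all_algebra.
From mathcomp Require Import ring.
Import Order.TTheory GRing.Theory Num.Theory.
Set Implicit Arguments. Unset Strict Implicit. Unset Printing Implicit Defensive.
Local Open Scope ring_scope.

Section HermitianForm.
Variable C : numClosedFieldType.
Implicit Types (g s t : C).

Definition dot n (p q : 'cV[C]_n) : C := \sum_i (p i 0)^* * q i 0.

Lemma dotC n (p q : 'cV[C]_n) : dot q p = (dot p q)^*.
Proof.
rewrite /dot rmorph_sum; apply: eq_bigr => i _.
by rewrite rmorphM /= conjCK mulrC.
Qed.

Lemma dotDl n (p q r : 'cV[C]_n) : dot (p + q) r = dot p r + dot q r.
Proof. by rewrite /dot -big_split; apply: eq_bigr => i _; rewrite mxE rmorphD mulrDl. Qed.

Lemma dotDr n (p q r : 'cV[C]_n) : dot p (q + r) = dot p q + dot p r.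
Proof. by rewrite /dot -big_split; apply: eq_bigr => i _; rewrite mxE mulrDr. Qed.

Lemma dotZl n c (p q : 'cV[C]_n) : dot (c *: p) q = c^* * dot p q.
Proof. by rewrite /dot mulr_sumr; apply: eq_bigr => i _; rewrite mxE rmorphM mulrA. Qed.

Lemma dotZr n c (p q : 'cV[C]_n) : dot p (c *: q) = c * dot p q.
Proof. by rewrite /dot mulr_sumr; apply: eq_bigr => i _; rewrite mxE mulrCA. Qed.

Lemma dotBl n (p q r : 'cV[C]_n) : dot (p - q) r = dot p r - dot q r.
Proof. by rewrite dotDl -scaleN1r dotZl rmorphN rmorph1 mulN1r. Qed.

Lemma dotNr n (p q : 'cV[C]_n) : dot p (- q) = - dot p q.
Proof. by rewrite -scaleN1r dotZr mulN1r. Qed.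

Lemma dotBr n (p q r : 'cV[C]_n) : dot p (q - r) = dot p q - dot p r.
Proof. by rewrite dotDr dotNr. Qed.

Lemma dot0r n (p : 'cV[C]_n) : dot p 0 = 0.
Proof. by rewrite -(scale0r p) dotZr mul0r. Qed.

Lemma dot_ge0 n (p : 'cV[C]_n) : 0 <= dot p p.
Proof. by apply: sumr_ge0 => i _; rewrite -normCKC exprn_ge0. Qed.

Lemma dot_real n (p : 'cV[C]_n) : dot p p \is Num.real.
Proof. exact/ger0_real/dot_ge0. Qed.

Lemma dot_eq0 n (p : 'cV[C]_n) : dot p p = 0 -> p = 0.
Proof.
move=> /eqP; rewrite psumr_eq0 => [/allP p0|i _]; last by rewrite -normCKC exprn_ge0.
apply/matrixP => i j; rewrite (ord1 j) mxE.
by have /implyP/(_ isT) := p0 i (mem_index_enum i); rewrite -normCKC sqrf_eq0 normr_eq0 => /eqP.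
Qed.

Lemma vnorm2E n (p : 'cV[C]_n) : vnorm2 p = dot p p.
Proof. by apply: eq_bigr => i _; rewrite normCKC. Qed.

Lemma dot_trmx m n (R : 'M[C]_(m, n)) p q :
  R \is a realmx -> dot (R^T *m p) q = dot p (R *m q).
Proof.
move=> /mxOverP Rreal; rewrite /dot.
under eq_bigr => i _ do rewrite !mxE rmorph_sum mulr_suml.
rewrite exchange_big /=; apply: eq_bigr => j _; rewrite !mxE mulr_sumr.
by apply: eq_bigr => i _; rewrite mxE rmorphM /= (conj_Creal (Rreal _ _)) mulrCA mulrA.
Qed.

Definition psdmx n (N : 'M[C]_n) := forall p, 0 <= dot p (N *m p).

Lemma psdmx_real n (N : 'M[C]_n) p : psdmx N -> dot p (N *m p) \is Num.real.
Proof. by move=> /(_ p)/ger0_real. Qed.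

Lemma dot_expand n (N : 'M[C]_n) (p q : 'cV[C]_n) t :
  t \is Num.real ->
  dot (t *: p - q) (N *m (t *: p - q)) =
  t ^+ 2 * dot p (N *m p) - t * (dot p (N *m q) + dot q (N *m p)) + dot q (N *m q).
Proof.
move=> treal; rewrite mulmxBr -scalemxAr dotBl !dotBr !dotZl !dotZr (conj_Creal treal).
by rewrite expr2; ring.
Qed.

Lemma psdmx_amgm n (N : 'M[C]_n) (p q : 'cV[C]_n) t :
  psdmx N -> t \is Num.real ->
  t * (dot p (N *m q) + dot q (N *m p)) <= t ^+ 2 * dot p (N *m p) + dot q (N *m q).
Proof.
move=> Npsd treal; by have := Npsd (t *: p - q); rewrite dot_expand // addrAC subr_ge0.
Qed.

Lemma psdmx1 n : psdmx (1%:M : 'M[C]_n).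
Proof. by move=> p; rewrite mul1mx dot_ge0. Qed.

Lemma dot_gain_le n (p q : 'cV[C]_n) g :
  0 < g -> dot p p <= g ^+ 2 * dot q q -> dot p q + dot q p <= 2 * g * dot q q.
Proof.
move=> g_gt0 le_pq; rewrite -(ler_pM2l g_gt0).
have := psdmx_amgm q p (@psdmx1 n) (gtr0_real g_gt0).
rewrite !mul1mx [dot q p + _]addrC => /le_trans; apply.
have -> : g * (2 * g * dot q q) = g ^+ 2 * dot q q + g ^+ 2 * dot q q by ring.
by rewrite lerD2l.
Qed.

Section Resolvent.
Variables (n k : nat) (L : 'M[C]_n) (E : 'M[C]_(n, k)).
Hypotheses (L_psd : psdmx L) (E_real : E \is a realmx).

Lemma dot_mulmx_shift om (y : 'cV[C]_n) :
  dot y (((om * 'i)%:M + L) *m y) = dot y (L *m y) + 'i * (om * dot y y).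
Proof. by rewrite mulmxDl dotDr mul_scalar_mx dotZr addrC mulrCA mulrA. Qed.

Lemma shift_psd_unit om : om \is Num.real -> om != 0 -> ((om * 'i)%:M + L) \in unitmx.
Proof.
move=> om_real om_neq0; rewrite -unitmx_tr -row_free_unit; apply: inj_row_free => v vA0.
have : dot v^T (((om * 'i)%:M + L) *m v^T) = 0.
  by rewrite -[_ + L]trmxK -trmx_mul vA0 trmx0 dot0r.
rewrite dot_mulmx_shift => /(congr1 (fun z => 'Im z)).
rewrite Im_rect ?rpredM ?dot_real ?psdmx_real // raddf0 => /eqP.
by rewrite mulf_eq0 (negbTE om_neq0) => /eqP/dot_eq0/(congr1 trmx); rewrite trmxK trmx0.
Qed.

Lemma shift_psd_gain_le om g (y : 'cV[C]_n) (u : 'cV[C]_k) :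
  om \is Num.real -> 0 < g ->
  ((om * 'i)%:M + L) *m y = E *m u ->
  dot (E^T *m y) (E^T *m y) <= g ^+ 2 * dot u u ->
  dot y (L *m y) <= g * dot u u /\ om * dot y y <= g * dot u u.
Proof.
move=> om_real g_gt0 Ay gain.
set Ly := dot y (L *m y); set Y := dot y y.
have S : dot (E^T *m y) u = Ly + 'i * (om * Y) by rewrite dot_trmx // -Ay dot_mulmx_shift.
have Sc : dot u (E^T *m y) = Ly - 'i * (om * Y).
  rewrite dotC S rmorphD rmorphM /= conjCi rmorphM /= !conj_Creal ?dot_real ?psdmx_real //.
  by rewrite mulNr.
have two_gt0 : (0 : C) < 2 by rewrite ltr0n.
split; rewrite -(ler_pM2l two_gt0).
  have := dot_gain_le g_gt0 gain; rewrite S Sc -mulrA.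
  by have -> : Ly + 'i * (om * Y) + (Ly - 'i * (om * Y)) = 2 * Ly by ring.
have norm_iu : dot (- 'i *: u) (- 'i *: u) = dot u u.
  by rewrite dotZl dotZr rmorphN /= conjCi opprK mulNr mulrN mulrA -expr2 sqrCi mulN1r opprK.
rewrite -norm_iu in gain; have := dot_gain_le g_gt0 gain.
rewrite norm_iu dotZl dotZr S Sc rmorphN /= conjCi opprK -mulrA.
have -> // : - 'i * (Ly + 'i * (om * Y)) + 'i * (Ly - 'i * (om * Y)) = 2 * (om * Y).
by rewrite mulNr mulrDr mulrBr !mulrA -expr2 sqrCi; ring.
Qed.

Hypotheses (L_real : L \is a realmx) (L_sym : L^T = L).

Lemma transfer_energy_le_approx g s (x : 'cV[C]_n) :
  0 < g -> 0 < s -> hinf_le (transfer L E) g ->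
  dot (E^T *m x) (E^T *m x) <=
    g * dot x (L *m x) + s * (dot x x + g * dot (E^T *m x) (E^T *m x)).
Proof.
move=> g_gt0 s_gt0 Hinf; set u := E^T *m x; set Nu := dot u u.
have s_real := gtr0_real s_gt0; have g_real := gtr0_real g_gt0.
have om_real : s ^+ 2 \is Num.real by rewrite rpredX.
have om_neq0 : s ^+ 2 != 0 by rewrite expf_neq0 // gt_eqF.
(* With omega = s^2 both error terms of the AM-GM steps below are O(s). *)
set A := (s ^+ 2 * 'i)%:M + L.
set y := invmx A *m (E *m u).
have Ay : A *m y = E *m u by rewrite mulmxA mulmxV ?mul1mx // shift_psd_unit.
have gain : dot (E^T *m y) (E^T *m y) <= g ^+ 2 * Nu.
  have := Hinf _ om_real om_neq0 u; rewrite !vnorm2E.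
  by rewrite /transfer -!mulmxA.
have [Ly_le Y_le] := shift_psd_gain_le om_real g_gt0 Ay gain.
set w := (s * 'i) *: y.
have two_Nu : 2 * Nu = (dot x (L *m y) + dot y (L *m x)) + s * (dot x w + dot w x).
  have Nu_xy : Nu = dot x (A *m y) by rewrite Ay -dot_trmx.
  have Nu_yx : Nu = dot (A *m y) x by rewrite dotC -Nu_xy conj_Creal ?dot_real.
  rewrite mulr2n mulrDl mul1r {1}Nu_xy Nu_yx mulmxDl dotDr dotDl.
  have -> : dot (L *m y) x = dot y (L *m x) by rewrite -{1}L_sym dot_trmx.
  rewrite !mul_scalar_mx !dotZl !dotZr !rmorphM /= conjCi.
  by rewrite !conj_Creal //; ring.
have amgmL := psdmx_amgm x y L_psd g_real.
have w_norm : dot w w = s ^+ 2 * dot y y.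
  rewrite dotZl dotZr rmorphM /= conjCi (conj_Creal s_real) mulrA.
  by have i2 := sqrCi C; ring: i2.
have := psdmx_amgm x w (@psdmx1 n) (rpred1 _).
rewrite !mul1mx mul1r expr1n mul1r w_norm => amgmI.
have gs_ge0 : 0 <= g * s by rewrite mulr_ge0 // ltW.
rewrite -(ler_pM2l g_gt0) -(lerD2r (g * Nu)).
have -> : g * Nu + g * Nu = g * (2 * Nu) by ring.
rewrite two_Nu mulrDr mulrA.
apply: (le_trans (lerD amgmL (ler_wpM2l gs_ge0 amgmI))).
have -> : g * (g * dot x (L *m x) + s * (dot x x + g * Nu)) + g * Nu =
  g ^+ 2 * dot x (L *m x) + g * Nu + g * s * (dot x x + g * Nu) by ring.
by rewrite lerD ?lerD2l // ler_wpM2l // lerD2l.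
Qed.

Lemma transfer_energy_le g (x : 'cV[C]_n) :
  0 < g -> hinf_le (transfer L E) g ->
  dot (E^T *m x) (E^T *m x) <= g * dot x (L *m x).
Proof.
move=> g_gt0 Hinf; apply/ler_addgt0Pr => e e_gt0.
set K := dot x x + g * dot (E^T *m x) (E^T *m x).
have K1_gt0 : 0 < K + 1 by rewrite ltr_wpDl ?ltr01 // addr_ge0 ?mulr_ge0 ?dot_ge0 ?ltW.
apply: le_trans (transfer_energy_le_approx x g_gt0 _ Hinf) _; first exact: divr_gt0 e_gt0 K1_gt0.
by rewrite lerD2l mulrAC ler_pdivrMr // ler_pM2l // lerDl ler01.
Qed.

End Resolvent.

Lemma real_quadformE n (N : 'M[C]_n) (x : 'cV[C]_n) :
  x \is a realmx -> (x^T *m N *m x) 0 0 = dot x (N *m x).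
Proof.
move=> /mxOverP x_real; rewrite -mulmxA mxE; apply: eq_bigr => i _.
by rewrite mxE conj_Creal.
Qed.

Lemma riccati_scalarE n k (L : 'M[C]_n) (E : 'M[C]_(n, k)) g :
  L^T = L -> g != 0 ->
  - (g%:M *m L) - L^T *m g%:M + E *m E^T + g ^- 2 *: (g%:M *m E *m E^T *m g%:M) =
  2%:R *: (E *m E^T - g *: L).
Proof.
move=> L_sym g_neq0; rewrite L_sym mul_mx_scalar !mul_scalar_mx -scalemxAl mul_mx_scalar.
rewrite !scalerA; have -> : g ^- 2 * g * g = 1 by rewrite -mulrA -expr2 mulVf ?expf_neq0.
by rewrite scale1r; apply/matrixP => i j; rewrite !mxE; ring.
Qed.

End HermitianForm.

Section GraphMatrices.
Variables (C : numClosedFieldType) (n m : nat) (src dst : 'I_m -> 'I_n) (w : 'I_m -> C).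

Lemma incidence_real : incidence C src dst \is a realmx.
Proof. by apply/mxOverP => i j; rewrite mxE rpredB ?rpred_nat. Qed.

Lemma laplacian_sym : (laplacian src dst w)^T = laplacian src dst w.
Proof. by rewrite /laplacian !trmx_mul trmxK /weightmx tr_diag_mx mulmxA. Qed.

Hypothesis w_ge0 : forall j, 0 <= w j.

Lemma laplacian_real : laplacian src dst w \is a realmx.
Proof.
have B_real := incidence_real; have BT_real : (incidence C src dst)^T \is a realmx.
  by apply/mxOverP => i j; rewrite mxE (mxOverP B_real).
rewrite /laplacian !mxOverM // mxOver_diag ?rpred0 //.
by apply/mxOverP => i j; rewrite mxE ger0_real.
Qed.

Lemma laplacian_psd : psdmx (laplacian src dst w).
Proof.
move=> p; rewrite /laplacian -!mulmxA -dot_trmx ?incidence_real //.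
set c := _^T *m p; rewrite /weightmx mul_diag_mx /dot; apply: sumr_ge0 => j _.
by rewrite !mxE mulrCA -normCKC mulr_ge0 ?exprn_ge0.
Qed.

End GraphMatrices.

Lemma port_matrix_real (C : numClosedFieldType) n k (E : 'M[C]_(n, k)) :
  port_matrix E -> E \is a realmx.
Proof.
move=> E_port; apply/mxOverP => i j; have [_ [_ E0]] := E_port j.
have [-> | E1] := eqVneq (E i j) 1; first exact: rpred1.
have [-> | EN1] := eqVneq (E i j) (-1); first by rewrite rpredN rpred1.
by rewrite E0 ?rpred0.
Qed.

Theorem theorem2 (C : numClosedFieldType) (n m k : nat)
  (src dst : 'I_m -> 'I_n) (w : 'I_m -> C) (E : 'M[C]_(n, k)) (gamma : C) :
  (forall j, src j != dst j) ->
  (forall j, 0 <= w j) ->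
  connected_graph src dst w ->
  port_matrix E ->
  0 < gamma ->
  hinf_le (transfer (laplacian src dst w) E) gamma ->
  let L := laplacian src dst w in
  let P := gamma%:M : 'M[C]_n in
  nsd (- (P *m L) - L^T *m P + E *m E^T + gamma ^- 2 *: (P *m E *m E^T *m P)).
Proof.
move=> _ w_ge0 _ E_port g_gt0 Hinf L P.
have L_sym : L^T = L := laplacian_sym src dst w.
have E_real := port_matrix_real E_port.
rewrite /P riccati_scalarE // ?gt_eqF //; split.
  have sym : (E *m E^T - gamma *: L)^T = E *m E^T - gamma *: L.
    by rewrite linearB /= linearZ /= trmx_mul trmxK L_sym.
  by rewrite linearN /= linearZ /= sym.
move=> x x_real; rewrite real_quadformE; last by apply/mxOverP => i j; rewrite (ord1 j).
rewrite mulNmx dotNr -scalemxAl dotZr mulmxBl dotBr -scalemxAl dotZr -mulmxA -dot_trmx //.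
rewrite oppr_ge0 pmulr_rle0 ?ltr0n // subr_le0.
by apply: transfer_energy_le => //; [apply: laplacian_psd | apply: laplacian_real].
Qed.
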